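(* Let $N>2$, $1<p<N$, and assume (H1)–(H4). For $a>0$ let $v_a$ be the solution on $[0,T]$ of $$(|v'(t)|^{p-2}v'(t))'+h(t)f(v(t))=0,\qquad v(0)=0,\ v'(0)=a.$$ Then $\max_{[0,T]}v_a\to\infty$ as $a\to\infty$.
   Context: Standing hypotheses. $f:\mathbb{R}\setminus\{0\}\to\mathbb{R}$ is odd and locally Lipschitz, and: (H1) there is a locally Lipschitz $g_1:\mathbb{R}\to\mathbb{R}$ and $l>p-1$ with $f(u)=|u|^{l-1}u+g_1(u)$ for all large $|u|$, and $\lim_{u\to\infty}|g_1(u)|/|u|^l=0$; (H2) there is a locally Lipschitz $g_2:\mathbb{R}\to\mathbb{R}$ with $g_2(0)=0$ and $0<m<1$ such that $f(u)=-\frac{1}{|u|^{m-1}u}+g_2(u)$ for all small $|u|\neq 0$; (H3) $f$ has a unique positive zero $\beta$, with $f<0$ on $(0,\beta)$ and $f>0$ on $(\beta,\infty)$; (H4) $K>0$ and $K'$ are continuous on $[R,\infty)$ (for a fixed $R>0$), $\frac{rK'(r)}{K(r)}>-\frac{(N-1)p}{p-1}$ on $[R,\infty)$, and there are constants $K_0,K_1>0$ with $\frac{K_0}{r^{\alpha}}\le K(r)\le \frac{K_1}{r^{\alpha_1}}$ on $[R,\infty)$, where $N+\frac{m(N-p)}{p-1}<\alpha_1\le\alpha<2(N-1)$. Notation: $T=R^{\frac{p-N}{p-1}}$ and, for $0<t\le T$, $h(t)=\left(\frac{N-p}{p-1}\right)^{-p}t^{\frac{p(N-1)}{p-N}}K\!\left(t^{\frac{p-1}{p-N}}\right)>0$.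 A solution of the initial value problem on an interval $[0,d]$ means $v\in C^1[0,d]$ such that $t\mapsto h(t)f(v(t))$ is integrable on $(0,t)$ for each $t\le d$ and $|v'(t)|^{p-2}v'(t)=a^{p-1}-\int_0^t h(s)f(v(s))\,ds$, $v(0)=0$; it exists uniquely on $[0,T]$ for each $a>0$. *)

From HB Require Import structures.
From mathcomp Require Import all_boot all_order all_algebra.
From mathcomp Require Import all_classical all_reals all_analysis.
Set Implicit Arguments. Unset Strict Implicit. Unset Printing Implicit Defensive.
Import Order.TTheory GRing.Theory Num.Theory.
Import numFieldNormedType.Exports.
Local Open Scope classical_set_scope.
Local Open Scope ring_scope.

Section Defs.
Variable R : realType.

Definition locally_lipschitz_on (D : set R) (f : R -> R) : Prop :=
  forall x, D x -> exists d : R, 0 < d /\ exists L : R,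
    forall y z, D y -> D z -> `|y - x| < d -> `|z - x| < d ->
      `|f y - f z| <= L * `|y - z|.

Definition punct : set R := [set u | u != 0].

Definition odd_fun (f : R -> R) : Prop := forall u, u != 0 -> f (- u) = - f u.

Definition H1 (p : R) (f : R -> R) : Prop :=
  exists g1 : R -> R, locally_lipschitz_on setT g1 /\
  exists l : R, p - 1 < l /\
  (exists M : R, forall u, M < `|u| -> f u = `|u| `^ (l - 1) * u + g1 u) /\
  ((fun u => `|g1 u| / `|u| `^ l) @ +oo --> (0 : R)).

(* the exponent m is a parameter since it also appears in (H4) *)
Definition H2 (m : R) (f : R -> R) : Prop :=
  exists g2 : R -> R, locally_lipschitz_on setT g2 /\ g2 0 = 0 /\
  0 < m < 1 /\
  exists d : R, 0 < d /\
    forall u, u != 0 -> `|u| < d -> f u = - (`|u| `^ (m - 1) * u)^-1 + g2 u.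

Definition H3 (f : R -> R) : Prop :=
  exists beta : R, 0 < beta /\ f beta = 0 /\
    (forall u, 0 < u < beta -> f u < 0) /\ (forall u, beta < u -> 0 < f u) /\
    (forall u, 0 < u -> f u = 0 -> u = beta).

(* (H4): K and K' continuous on [R0, oo) (K' is the derivative of K there:
   K is differentiable with derivative K' on (R0, oo), K, K' continuous on
   [R0, oo), which is the C^1 condition on the closed half-line). *)
Definition H4 (N p m : R) (R0 : R) (K : R -> R) : Prop :=
  exists K' : R -> R,
    {within `[R0, +oo[, continuous K} /\ {within `[R0, +oo[, continuous K'} /\
    (forall r, R0 < r -> is_derive r 1 K (K' r)) /\
    (forall r, R0 <= r -> 0 < K r) /\
    (forall r, R0 <= r -> - ((N - 1) * p / (p - 1)) < r * K' r / K r) /\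
    exists K0 K1 alpha alpha1 : R, 0 < K0 /\ 0 < K1 /\
      N + m * (N - p) / (p - 1) < alpha1 /\ alpha1 <= alpha /\
      alpha < 2 * (N - 1) /\
      (forall r, R0 <= r ->
         K0 / r `^ alpha <= K r /\ K r <= K1 / r `^ alpha1).

Definition Tend (N p R0 : R) : R := R0 `^ ((p - N) / (p - 1)).

Definition hfun (N p : R) (K : R -> R) (t : R) : R :=
  ((N - p) / (p - 1)) `^ (- p) * t `^ (p * (N - 1) / (p - N))
    * K (t `^ ((p - 1) / (p - N))).

Definition phip (p x : R) : R := `|x| `^ (p - 2) * x.

Definition is_solution (N p : R) (K f : R -> R) (a d : R) (v : R -> R) : Prop :=
  exists v' : R -> R,
    {within `[0, d], continuous v} /\ {within `[0, d], continuous v'} /\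
    (forall t, 0 < t < d -> is_derive t 1 v (v' t)) /\
    v 0 = 0 /\
    (forall t, 0 < t <= d ->
       (@lebesgue_measure R).-integrable `]0, t[
          (fun s => ((hfun N p K s) * f (v s))%:E)) /\
    (forall t, 0 <= t <= d ->
       phip p (v' t) = a `^ (p - 1)
         - Rintegral (@lebesgue_measure R) `]0, t[ (fun s => hfun N p K s * f (v s))).

End Defs.

From HB Require Import structures.
From mathcomp Require Import all_boot all_order all_algebra.
From mathcomp Require Import all_classical all_reals all_analysis.
From mathcomp Require Import ring lra.
Import Order.TTheory GRing.Theory Num.Theory.
Import numFieldNormedType.Exports.
Local Open Scope classical_set_scope.
Local Open Scope ring_scope.

(* Suppose v_a <= M on [0, T].  Near 0 the solution v_1 is small and positive,
   so f(v_1) <= -1 there (f -> -oo at 0+); thus on a short interval (0, d) the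
   weight h, which need not be integrable at 0, is dominated by |h f(v_1)|.  As
   long as 0 < v_a <= M, f(v_a) is bounded above by the maximum C of f on (0, M],
   so the integral term of the equation is at most C times the integral of
   |h f(v_1)| over (0, d), i.e. at most a^(p-1)/2 for a large.  Hence
   v_a' >= c a on (0, d): v_a stays positive there and v_a(d) >= c a d > M. *)

Section RealLemmas.
Context {R : realType}.
Local Notation mu := (@lebesgue_measure R).

Lemma le_Rintegral_subset (g : R -> R) (A B : set R) :
  measurable A -> measurable B -> A `<=` B -> (forall x, B x -> 0 <= g x) ->
  mu.-integrable B (EFin \o g) -> Rintegral mu A g <= Rintegral mu B g.
Proof.
move=> mA mB AB g_ge0 ig.
have igA : mu.-integrable A (EFin \o g) by exact: integrableS ig.
apply: fine_le; [exact: integrable_fin_num igA|exact: integrable_fin_num ig|].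
by apply: ge0_subset_integral => //; case/integrableP: ig.
Qed.

Lemma Rintegral_le_mul_norm (g1 g2 : R -> R) (C t d : R) : 0 <= C -> 0 < t <= d ->
  mu.-integrable `]0, t[ (EFin \o g1) -> mu.-integrable `]0, d[ (EFin \o g2) ->
  (forall s, 0 < s < t -> g1 s <= C * `|g2 s|) ->
  Rintegral mu `]0, t[ g1 <= C * Rintegral mu `]0, d[ (fun s => `|g2 s|).
Proof.
move=> C_ge0 /andP[t_gt0 td] ig1 ig2 g1_le.
have sub_td : `]0, t[ `<=` `]0, d[ by apply: subset_itvl; rewrite bnd_simp.
have ig2t : mu.-integrable `]0, t[ (EFin \o (fun s => `|g2 s|)).
  by apply: integrable_norm; exact: integrableS ig2.
apply: (@le_trans _ _ (Rintegral mu `]0, t[ (fun s => C * `|g2 s|))).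
  by apply: le_Rintegral => //; apply: (@integrableZl _ _ _ mu _ _ C _ ig2t).
rewrite RintegralZl //; apply: ler_wpM2l => //.
by apply: le_Rintegral_subset => //; exact: integrable_norm.
Qed.

Lemma within_continuous_dist_lt {g : R -> R} {A : set R} {x e : R} :
  {within A, continuous g} -> A x -> 0 < e ->
  exists2 d, 0 < d & forall y, A y -> `|y - x| < d -> `|g y - g x| < e.
Proof.
move=> /subspace_continuousP cg Ax e_gt0.
move: (cg x Ax) => /cvgrPdist_lt /(_ e e_gt0).
rewrite /within /= => /nbhs_ballP[d /= d_gt0 gd].
exists d => // y Ay yx; rewrite distrC; apply: gd => //.
by rewrite /ball /= distrC.
Qed.

Lemma MVT_from0 {v w : R -> R} {T s : R} : 0 < s <= T -> {within `[0, T], continuous v} ->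
  (forall t, 0 < t < T -> is_derive t 1 v (w t)) ->
  exists2 c, 0 < c < s & v s - v 0 = w c * s.
Proof.
move=> /andP[s_gt0 sT] cv dv.
have [||c cin ->] := @MVT R v w 0 s s_gt0.
- move=> x; rewrite in_itv /= => /andP[x_gt0 xs]; apply: dv.
  by rewrite x_gt0 (lt_le_trans xs sT).
- by apply: continuous_subspaceW cv; apply: subset_itvl; rewrite bnd_simp.
- by exists c; [rewrite in_itv /= in cin|rewrite subr0].
Qed.

Lemma derive0_gt0_near0 {v w : R -> R} {T : R} : 0 < T ->
  {within `[0, T], continuous v} -> {within `[0, T], continuous w} ->
  (forall t, 0 < t < T -> is_derive t 1 v (w t)) -> 0 < w 0 ->
  exists2 e, 0 < e <= T & forall s, 0 < s <= e -> v 0 < v s.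
Proof.
move=> T_gt0 cv cw dv w0_gt0.
have I0 : `[0, T]%classic 0 by rewrite /= in_itv /= lexx ltW.
have [d d_gt0 wd] := within_continuous_dist_lt cw I0 w0_gt0.
have d2_gt0 : 0 < d / 2 by rewrite divr_gt0.
exists (Num.min (d / 2) T) => [|s /andP[s_gt0]].
  by rewrite lt_min d2_gt0 T_gt0 ge_min lexx orbT.
rewrite le_min => /andP[sd sT].
have s_in : 0 < s <= T by rewrite s_gt0.
have [c /andP[c_gt0 cs] vs] := MVT_from0 s_in cv dv.
rewrite -subr_gt0 vs; apply: mulr_gt0 => //.
have : `|w c - w 0| < w 0.
  apply: wd; first by rewrite /= in_itv /= ltW //= ltW // (lt_le_trans cs sT).
  rewrite subr0 gtr0_norm //; apply: (lt_le_trans cs); apply: (le_trans sd).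
  rewrite ler_pdivrMr // ler_peMr //; lra.
rewrite ltr_norml; lra.
Qed.

(* Argue at the infimum of the points of (0, d) where v <= 0. *)
Lemma gt0_continuation {v : R -> R} {d e : R} : 0 < e ->
  {within `[0, d], continuous v} -> (forall s, 0 < s <= e -> 0 < v s) ->
  (forall t, 0 < t < d -> (forall s, 0 < s < t -> 0 < v s) -> 0 < v t) ->
  forall s, 0 < s < d -> 0 < v s.
Proof.
move=> e_gt0 cv v_gt0 step s /andP[s_gt0 sd]; rewrite ltNge; apply/negP => vs.
pose S := [set t | 0 < t < d /\ v t <= 0].
have Ss : S s by split; rewrite ?s_gt0.
have hS : has_lbound S by exists 0 => y [/andP[y_gt0 _] _]; exact: ltW.
have t0s : inf S <= s by exact: ge_inf.
have et0 : e <= inf S.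
  apply: lb_le_inf; first by exists s.
  move=> y [/andP[y_gt0 _] vy]; rewrite leNgt; apply/negP => ye.
  by move: vy; rewrite leNgt v_gt0 // y_gt0 ltW.
have t0_gt0 : 0 < inf S by exact: lt_le_trans et0.
have vt0 : 0 < v (inf S).
  apply: step; first by rewrite t0_gt0 (le_lt_trans t0s sd).
  move=> y /andP[y_gt0 yt0]; rewrite ltNge; apply/negP => vy.
  have : S y by split; rewrite // y_gt0 (lt_trans yt0) // (le_lt_trans t0s sd).
  by move/(ge_inf hS); rewrite leNgt yt0.
have It0 : `[0, d]%classic (inf S) by rewrite /= in_itv /= ltW //= ltW // (le_lt_trans t0s).
have [r r_gt0 vr] := within_continuous_dist_lt cv It0 vt0.
have [y Sy yr] := inf_adherent r_gt0 (conj (ex_intro _ s Ss) hS).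
have t0y := ge_inf hS Sy.
case: Sy => /andP[y_gt0 yd] vy.
have : `|v y - v (inf S)| < v (inf S).
  apply: vr; first by rewrite /= in_itv /= !ltW.
  by rewrite ger0_norm ?subr_ge0 // ltrBlDl.
rewrite ltr_norml; lra.
Qed.

Lemma phip_gt0 (p x : R) : 0 < phip p x -> 0 < x.
Proof.
rewrite /phip ltNge => /negP phi_gt0; rewrite ltNge; apply/negP => x_le0.
by apply: phi_gt0; apply: mulr_ge0_le0 => //; exact: powR_ge0.
Qed.

Lemma phip_gt0E (p x : R) : 0 < x -> phip p x = x `^ (p - 1).
Proof.
move=> x_gt0; rewrite /phip gtr0_norm // -[X in _ * X]powRr1 ?ltW //.
rewrite -powRD; last by apply/implyP => _; rewrite gt_eqF.
by congr (_ `^ _); lra.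
Qed.

Lemma lt_powR_invr {q x a : R} : 0 < q -> 0 <= x -> 0 <= a ->
  x `^ q^-1 < a -> x < a `^ q.
Proof.
move=> q_gt0 x_ge0 a_ge0 xa.
have := @gt0_ltr_powR R q q_gt0 (x `^ q^-1) a.
rewrite !nnegrE powR_ge0 a_ge0 => /(_ isT isT xa).
by rewrite -powRrM mulVf ?gt_eqF // powRr1.
Qed.

Lemma phip_half_lb (p x a : R) : 1 < p -> 0 < a ->
  a `^ (p - 1) / 2 <= phip p x -> (2^-1) `^ (p - 1)^-1 * a <= x.
Proof.
move=> p_gt1 a_gt0 ax.
have p1_gt0 : 0 < p - 1 by rewrite subr_gt0.
have x_gt0 : 0 < x.
  by apply: phip_gt0; apply: lt_le_trans ax; rewrite divr_gt0 ?powR_gt0.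
rewrite leNgt; apply/negP => /(@gt0_ltr_powR R (p - 1) p1_gt0).
rewrite !nnegrE ltW // mulr_ge0 ?powR_ge0 ?ltW // => /(_ isT isT).
rewrite powRM ?powR_ge0 ?ltW // -powRrM mulVf ?gt_eqF // powRr1 //.
by rewrite mulrC -phip_gt0E // ltNge ax.
Qed.

Lemma locally_lipschitz_punct_continuous (f : R -> R) x :
  locally_lipschitz_on (@punct R) f -> x != 0 -> {for x, continuous f}.
Proof.
move=> lip x_neq0.
have [d [d_gt0 [L fL]]] := lip x x_neq0.
have L1_gt0 : 0 < `|L| + 1 by rewrite ltr_pwDr.
apply/cvgrPdist_lt => e e_gt0; apply/nbhs_ballP.
exists (Num.min (Num.min d `|x|) (e / (`|L| + 1))).
  by rewrite /= !lt_min d_gt0 normr_gt0 x_neq0 divr_gt0.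
move=> y; rewrite /ball /= !lt_min => /andP[/andP[yd yx] ye].
have y_neq0 : y != 0.
  by apply: contraTneq yx => ->; rewrite subr0 ltxx.
rewrite distrC in yd ye.
have := fL x y x_neq0 y_neq0; rewrite subrr normr0 => /(_ d_gt0 yd) fxy.
apply: (le_lt_trans fxy); rewrite distrC.
apply: (@le_lt_trans _ _ (`|L| * `|y - x|)); first by rewrite ler_wpM2r ?ler_norm.
move: ye; rewrite ltr_pdivlMr // => ye.
have := normr_ge0 (y - x); have := normr_ge0 L; nra.
Qed.

End RealLemmas.

Section Nonlinearity.
Context {R : realType} {f : R -> R}.

Lemma H3_bounded_above (M : R) : locally_lipschitz_on (@punct R) f -> H3 f ->
  exists2 C, 0 <= C & forall u, 0 < u <= M -> f u <= C.
Proof.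
move=> lip [be [be_gt0 [_ [f_lt0 [f_gt0 _]]]]].
have [Mbe|beM] := ltP M be.
  exists 0 => // u /andP[u_gt0 uM]; apply: ltW; apply: f_lt0.
  by rewrite u_gt0 (le_lt_trans uM Mbe).
have cf : {within `[be, M], continuous f}.
  apply: continuous_in_subspaceT => x; rewrite inE /= in_itv /= => /andP[bex _].
  by apply: locally_lipschitz_punct_continuous lip _; rewrite gt_eqF // (lt_le_trans be_gt0).
have [c _ fc] := EVT_max beM cf.
exists (Num.max 0 (f c)) => [|u /andP[u_gt0 uM]]; first by rewrite le_max lexx.
rewrite le_max; have [ube|beu] := ltP u be.
  by rewrite ltW // f_lt0 // u_gt0 ube.
by rewrite fc ?orbT // in_itv /= beu uM.
Qed.

Lemma H2_le_m1_near0 {m : R} : H2 m f ->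
  exists2 u1, 0 < u1 & forall u, 0 < u < u1 -> f u <= -1.
Proof.
move=> [g2 [lip [g20 [/andP[m_gt0 _] [d [d_gt0 fE]]]]]].
have [//|d1 [d1_gt0 [L gL]]] := lip 0.
have L1_gt0 : 0 < `|L| + 1 by rewrite ltr_pwDr.
pose u0 : R := (2^-1) `^ m^-1.
have u0_gt0 : 0 < u0 by apply: powR_gt0.
exists (Num.min (Num.min d d1) (Num.min u0 (`|L| + 1)^-1)).
  by rewrite !lt_min d_gt0 d1_gt0 u0_gt0 invr_gt0.
move=> u /andP[u_gt0]; rewrite !lt_min => /andP[/andP[ud ud1] /andP[uu0 uL]].
rewrite fE ?gt_eqF ?gtr0_norm // mulrC mulr_powRB1 ?ltW //.
have g2u : g2 u <= 1.
  have := gL u 0 I I; rewrite subrr normr0 subr0 gtr0_norm // g20 subr0.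
  move=> /(_ ud1 d1_gt0) gu; apply: (le_trans (ler_norm _)); apply: (le_trans gu).
  move: uL; rewrite -[_^-1]mul1r ltr_pdivlMr // => uL.
  have := ler_norm L; nra.
have um : u `^ m < 2^-1.
  have := @gt0_ltr_powR R m m_gt0 u u0; rewrite !nnegrE !ltW // => /(_ isT isT uu0).
  by rewrite /u0 -powRrM mulVf ?gt_eqF // powRr1.
have := @powR_gt0 R u m u_gt0.
move: um; set y := u `^ m => um y_gt0.
have yV : y * y^-1 = 1 by rewrite divff // gt_eqF.
nra.
Qed.

End Nonlinearity.

Section Solutions.
Context {R : realType} {N p m R0 : R} {K f : R -> R}.
Hypotheses (p_gt1 : 1 < p) (p_ltN : p < N) (R0_gt0 : 0 < R0).
Hypothesis HK : H4 N p m R0 K.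
Local Notation T := (Tend N p R0).
Local Notation h := (hfun N p K).
Local Notation mu := (@lebesgue_measure R).

Lemma Tend_gt0 : 0 < T.
Proof. exact: powR_gt0. Qed.

Lemma hfun_ge0 s : 0 < s <= T -> 0 <= h s.
Proof.
case: HK => [K' [_ [_ [_ [K_gt0 _]]]]] /andP[s_gt0 sT].
rewrite /hfun !mulr_ge0 ?powR_ge0 // ltW // K_gt0 //.
pose r := (p - 1) / (N - p).
have r_gt0 : 0 < r by rewrite divr_gt0 // subr_gt0.
have -> : (p - 1) / (p - N) = - r by rewrite /r -mulrN -invrN opprB.
have Tr : T `^ r = R0^-1.
  rewrite /Tend -powRrM -[R0^-1]powR_inv1 ?ltW //; congr (_ `^ _).
  by rewrite /r; field; rewrite !subr_eq0 !gt_eqF.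
have sr : s `^ r <= T `^ r.
  by apply: ge0_ler_powR; rewrite // ?nnegrE ?ltW // Tend_gt0.
rewrite Tr in sr; rewrite powRN.
by rewrite -(invrK R0) ler_pV2 // inE /= ?unitfE ?gt_eqF ?invr_gt0 ?powR_gt0.
Qed.

Lemma solution_gt0_near0 {a : R} {v : R -> R} : 0 < a -> is_solution N p K f a T v ->
  exists2 e, 0 < e <= T & forall s, 0 < s <= e -> 0 < v s.
Proof.
move=> a_gt0 [w [cv [cw [dv [v0 [_ phiw]]]]]].
have w0_gt0 : 0 < w 0.
  apply: (@phip_gt0 _ p); rewrite phiw ?lexx ?ltW ?Tend_gt0 //.
  by rewrite set_itvoo0 Rintegral_set0 subr0 powR_gt0.
have [e eT ve] := derive0_gt0_near0 Tend_gt0 cv cw dv w0_gt0.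
by exists e => // s se; rewrite -v0; apply: ve.
Qed.

Lemma solution_f_le_m1_near0 {a u1 : R} {v : R -> R} : 0 < a -> is_solution N p K f a T v ->
  0 < u1 -> (forall u, 0 < u < u1 -> f u <= -1) ->
  exists2 d, 0 < d <= T & forall s, 0 < s < d -> f (v s) <= -1.
Proof.
move=> a_gt0 sol u1_gt0 f_le.
have [e /andP[e_gt0 eT] v_gt0] := solution_gt0_near0 a_gt0 sol.
case: sol => [w [cv [_ [_ [v0 _]]]]].
have I0 : `[0, T]%classic 0 by rewrite /= in_itv /= lexx ltW ?Tend_gt0.
have [d d_gt0 vd] := within_continuous_dist_lt cv I0 u1_gt0.
exists (Num.min e d) => [|s /andP[s_gt0]]; first by rewrite lt_min e_gt0 d_gt0 ge_min eT.
rewrite lt_min => /andP[se sd].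
have vs_gt0 : 0 < v s by rewrite v_gt0 // s_gt0 ltW.
apply: f_le; rewrite vs_gt0 /=.
have := vd s; rewrite v0 !subr0 (gtr0_norm s_gt0) (gtr0_norm vs_gt0); apply => //.
by rewrite /= in_itv /= ltW //= ltW // (lt_le_trans se eT).
Qed.

Lemma Rintegral_hf_le {a1 a d C M : R} {v1 v : R -> R} :
  is_solution N p K f a1 T v1 -> is_solution N p K f a T v -> 0 < d <= T ->
  (forall s, 0 < s < d -> f (v1 s) <= -1) -> 0 <= C ->
  (forall u, 0 < u <= M -> f u <= C) -> (forall t, 0 <= t <= T -> v t <= M) ->
  forall t, 0 < t <= d -> (forall s, 0 < s < t -> 0 < v s) ->
  Rintegral mu `]0, t[ (fun s => h s * f (v s))
    <= C * Rintegral mu `]0, d[ (fun s => `|h s * f (v1 s)|).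
Proof.
move=> [w1 [_ [_ [_ [_ [int1 _]]]]]] [w [_ [_ [_ [_ [int _]]]]]] /andP[d_gt0 dT].
move=> f_v1 C_ge0 f_leC v_leM t /andP[t_gt0 td] v_gt0.
apply: Rintegral_le_mul_norm => //; first by rewrite t_gt0.
- by apply: int; rewrite t_gt0 (le_trans td dT).
- by apply: int1; rewrite d_gt0.
move=> s /andP[s_gt0 st].
have sd : s < d := lt_le_trans st td.
have sT : 0 <= s <= T by rewrite ltW //= ltW // (lt_le_trans sd dT).
have hs : 0 <= h s by apply: hfun_ge0; rewrite s_gt0; case/andP: sT.
have f1 : 1 <= `|f (v1 s)|.
  have := f_v1 s; rewrite s_gt0 sd => /(_ isT) fv1.
  by rewrite ler0_norm; lra.
have fvs : f (v s) <= C by rewrite f_leC // v_gt0 ?s_gt0 // v_leM.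
rewrite normrM (ger0_norm hs) mulrCA (le_trans (ler_wpM2l hs fvs)) //.
by rewrite ler_wpM2l // ler_peMr.
Qed.

Section LargeSlope.
Context {a d : R} {v : R -> R}.
Hypotheses (a_gt0 : 0 < a) (v_sol : is_solution N p K f a T v) (dT : d <= T).
Hypothesis integral_le : forall t, 0 < t <= d -> (forall s, 0 < s < t -> 0 < v s) ->
  Rintegral mu `]0, t[ (fun s => h s * f (v s)) <= a `^ (p - 1) / 2.

Lemma solution_ge_linear {t : R} : 0 < t <= d -> (forall s, 0 < s < t -> 0 < v s) ->
  (2^-1) `^ (p - 1)^-1 * a * t <= v t.
Proof.
case: v_sol => [w [cv [_ [dv [v0 [_ phiw]]]]]] /andP[t_gt0 td] v_gt0.
have tT : 0 < t <= T by rewrite t_gt0 (le_trans td dT).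
have [c /andP[c_gt0 ct] vt] := MVT_from0 tT cv dv.
rewrite v0 subr0 in vt; rewrite vt; apply: ler_wpM2r; first exact: ltW.
have cT : 0 <= c <= T by rewrite ltW //= ltW // (lt_le_trans ct) // (le_trans td dT).
apply: phip_half_lb => //; rewrite phiw //.
have := integral_le c; rewrite c_gt0 ltW ?(lt_le_trans ct) // => /(_ isT).
have v_gt0c : forall s, 0 < s < c -> 0 < v s.
  by move=> s /andP[s_gt0 sc]; rewrite v_gt0 // s_gt0 (lt_trans sc).
by move=> /(_ v_gt0c); lra.
Qed.

Lemma solution_gt0 s : 0 < s < d -> 0 < v s.
Proof.
have [e /andP[e_gt0 _] v_gt0] := solution_gt0_near0 a_gt0 v_sol.
case: (v_sol) => [w [cv _]].
apply: (gt0_continuation e_gt0 _ v_gt0).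
  by apply: continuous_subspaceW cv; apply: subset_itvl; rewrite bnd_simp.
move=> t /andP[t_gt0 td] vt.
have td' : 0 < t <= d by rewrite t_gt0 ltW.
by apply: lt_le_trans (solution_ge_linear td' vt); rewrite !mulr_gt0 ?powR_gt0.
Qed.

Lemma solution_ge_linear_end : 0 < d -> (2^-1) `^ (p - 1)^-1 * a * d <= v d.
Proof.
move=> d_gt0; apply: solution_ge_linear; first by rewrite d_gt0 lexx.
by move=> s; exact: solution_gt0.
Qed.

End LargeSlope.
End Solutions.

Theorem lemma2p4 (R : realType) (N : nat) (p : R) (f K : R -> R) (R0 m : R)
  (v : R -> R -> R) :
  (2 < N)%N -> 1 < p -> p < N%:R ->
  odd_fun f -> locally_lipschitz_on (@punct R) f ->
  H1 p f ->
  H2 m f ->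
  H3 f ->
  0 < R0 -> H4 N%:R p m R0 K ->
  (forall a, 0 < a -> is_solution N%:R p K f a (Tend N%:R p R0) (v a)) ->
  forall M : R, exists A : R, forall a, A < a ->
    exists t, 0 <= t <= Tend N%:R p R0 /\ M < v a t.
Proof.
move=> _ p_gt1 p_ltN _ lip _ H2f H3f R0_gt0 HK sol M.
set T := Tend N%:R p R0.
have [u1 u1_gt0 f_le_m1] := H2_le_m1_near0 H2f.
have [C C_ge0 f_leC] := H3_bounded_above M lip H3f.
have [d d_in f_v1] :=
  solution_f_le_m1_near0 R0_gt0 ltr01 (sol 1 ltr01) u1_gt0 f_le_m1.
have /andP[d_gt0 dT] := d_in.
pose I1 := Rintegral lebesgue_measure `]0, d[ (fun s => `|hfun N%:R p K s * f (v 1 s)|).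
have I1_ge0 : 0 <= I1 by apply: Rintegral_ge0 => *; exact: normr_ge0.
pose k : R := (2^-1) `^ (p - 1)^-1.
have k_gt0 : 0 < k by apply: powR_gt0.
exists (Num.max ((2 * (C * I1)) `^ (p - 1)^-1) (M / (k * d))) => a.
rewrite gt_max => /andP[aC aM].
have a_gt0 : 0 < a := le_lt_trans (powR_ge0 _ _) aC.
have CI1 : C * I1 <= a `^ (p - 1) / 2.
  suff : 2 * (C * I1) < a `^ (p - 1) by lra.
  by apply: lt_powR_invr aC; rewrite ?subr_gt0 // ?mulr_ge0 // ltW.
apply: contrapT => v_gtM.
have v_leM t : 0 <= t <= T -> v a t <= M.
  by move=> tT; rewrite leNgt; apply/negP => Mt; apply: v_gtM; exists t.
have int_le t : 0 < t <= d -> (forall s, 0 < s < t -> 0 < v a s) ->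
    Rintegral lebesgue_measure `]0, t[ (fun s => hfun N%:R p K s * f (v a s))
      <= a `^ (p - 1) / 2.
  move=> td vt; apply: le_trans CI1.
  exact: (Rintegral_hf_le p_gt1 p_ltN R0_gt0 HK (sol 1 ltr01) (sol a a_gt0) d_in
    f_v1 C_ge0 f_leC v_leM).
have := solution_ge_linear_end p_gt1 R0_gt0 a_gt0 (sol a a_gt0) dT int_le d_gt0.
have := v_leM d; rewrite ltW //= dT => /(_ isT).
by move: aM; rewrite ltr_pdivrMr ?mulr_gt0 // /k; nra.
Qed.
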